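(* For any natural number $n\ge1$ and variables $x,y$, \[ \Psi(xy,\,-x^2-y^2,\,n)=\frac{x^n+y^n}{(x+y)^{\delta(n)}},\qquad \Phi(xy,\,-x^2-y^2,\,n)=\frac{x^n-y^n}{(x-y)(x+y)^{\delta(n-1)}}. \]
   Context: $\delta(m)=1$ for $m$ odd, $0$ for $m$ even. $\Psi(a,b,n)$, $\Phi(a,b,n)$ are defined by $\Psi(a,b,0)=2$, $\Psi(a,b,1)=1$, $\Psi(a,b,n+1)=(2a-b)^{\delta(n)}\Psi(a,b,n)-a\Psi(a,b,n-1)$ and $\Phi(a,b,0)=0$, $\Phi(a,b,1)=1$, $\Phi(a,b,n+1)=(2a-b)^{\delta(n+1)}\Phi(a,b,n)-a\Phi(a,b,n-1)$ for $n\ge1$. *)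

From mathcomp Require Import all_boot all_order all_algebra.
Set Implicit Arguments. Unset Strict Implicit. Unset Printing Implicit Defensive.
Import GRing.Theory.
Local Open Scope ring_scope.

Definition delta (m : nat) : nat := odd m.

Fixpoint Psi (R : comRingType) (a b : R) (n : nat) : R :=
  match n with
  | 0 => 2%:R
  | 1 => 1
  | (m.+1 as k).+1 => (2%:R * a - b) ^+ delta k * Psi a b k - a * Psi a b m
  end.

Fixpoint Phi (R : comRingType) (a b : R) (n : nat) : R :=
  match n with
  | 0 => 0
  | 1 => 1
  | (m.+1 as k).+1 => (2%:R * a - b) ^+ delta k.+1 * Phi a b k - a * Phi a b m
  end.

(* At a = xy, b = -x^2 - y^2 one has 2a - b = (x + y)^2.  Clearing denominators
   gives the identities (x + y)^delta(n) Psi_n = x^n + y^n and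
   (x - y)(x + y)^delta(n-1) Phi_n = x^n - y^n, valid in any commutative ring and
   for every n.  They follow by two-step induction from
   x^(n+2) +- y^(n+2) = (x + y)(x^(n+1) +- y^(n+1)) - xy (x^n +- y^n): the factor
   (2a - b)^delta = (x + y)^(2 delta) in the recurrences compensates the
   alternating powers of x + y. *)
From mathcomp Require Import all_boot all_order all_algebra.
From mathcomp Require Import ring.
Set Implicit Arguments.
Unset Strict Implicit.
Unset Printing Implicit Defensive.

Import GRing.Theory.
Local Open Scope ring_scope.

Lemma deltaSS (n : nat) : delta n.+2 = delta n.
Proof. by rewrite /delta /= negbK. Qed.

Lemma PsiSS (R : comNzRingType) (a b : R) (n : nat) :
  Psi a b n.+2 = (2%:R * a - b) ^+ delta n.+1 * Psi a b n.+1 - a * Psi a b n.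
Proof. by []. Qed.

Lemma PhiSS (R : comNzRingType) (a b : R) (n : nat) :
  Phi a b n.+2 = (2%:R * a - b) ^+ delta n.+2 * Phi a b n.+1 - a * Phi a b n.
Proof. by []. Qed.

Section PowerSums.
Variables (R : comNzRingType) (x y : R).

Lemma addrXX_rec (n : nat) :
  x ^+ n.+2 + y ^+ n.+2 = (x + y) * (x ^+ n.+1 + y ^+ n.+1) - x * y * (x ^+ n + y ^+ n).
Proof. by rewrite !exprS; ring. Qed.

Lemma subrXX_rec (n : nat) :
  x ^+ n.+2 - y ^+ n.+2 = (x + y) * (x ^+ n.+1 - y ^+ n.+1) - x * y * (x ^+ n - y ^+ n).
Proof. by rewrite !exprS; ring. Qed.

Let a := x * y.
Let b := - x ^+ 2 - y ^+ 2.

Lemma twice_a_sub_b : 2%:R * a - b = (x + y) ^+ 2.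
Proof. by rewrite /a /b; ring. Qed.

Lemma mul_Psi (n : nat) : (x + y) ^+ delta n * Psi a b n = x ^+ n + y ^+ n.
Proof.
elim/ltn_ind: n => -[|[|n]] IH; [by rewrite mul1r | by rewrite mulr1 |].
have IH0 := IH n (leqnSn n.+1); have IH1 := IH n.+1 (leqnn n.+2).
rewrite PsiSS twice_a_sub_b deltaSS addrXX_rec -IH0 -IH1 /delta /=.
by case: (odd n); rewrite /a; ring.
Qed.

Lemma mul_Phi (n : nat) :
  (x - y) * (x + y) ^+ delta n.-1 * Phi a b n = x ^+ n - y ^+ n.
Proof.
elim/ltn_ind: n => -[|[|n]] IH; [by rewrite mulr0 subrr | by rewrite mulr1 expr0 mulr1 |].
have IH0 := IH n (leqnSn n.+1); have IH1 := IH n.+1 (leqnn n.+2).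
rewrite PhiSS twice_a_sub_b subrXX_rec -IH0 -IH1.
(* [n.-1] truncates at 0, so [delta n.-1] alternates only from n = 1 on. *)
case: n {IH IH0 IH1} => [|n]; rewrite /delta /=; last case: (odd n); rewrite /a /=; ring.
Qed.

End PowerSums.

Theorem theorem11p1 (F : fieldType) (x y : F) (n : nat) :
  (1 <= n)%N -> x + y != 0 -> x - y != 0 ->
  Psi (x * y) (- x ^+ 2 - y ^+ 2) n = (x ^+ n + y ^+ n) / (x + y) ^+ delta n /\
  Phi (x * y) (- x ^+ 2 - y ^+ 2) n
    = (x ^+ n - y ^+ n) / ((x - y) * (x + y) ^+ delta n.-1).
Proof.
move=> _ xDy_neq0 xBy_neq0; split.
  by rewrite -(mul_Psi x y n) [RHS]mulrC mulKf // expf_neq0.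
by rewrite -(mul_Phi x y n) [RHS]mulrC mulKf // mulf_neq0 // expf_neq0.
Qed.
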